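(* The AMC (allocating marginal contributions) policy has competitive ratio $\alpha=\frac{2\mathsf{min}}{\mathsf{max}}$ with respect to greedy players when the characteristic functions range over $V_{\ge2}$.
   Context: Players: a finite set $N=\{a_1,\dots,a_n\}$. A characteristic function is $v:2^N\to\mathbb{R}_{\ge 0}$ with $v(\emptyset)=0$. There are fixed, known constants $0<\mathsf{min}\le\mathsf{max}$ and every $v$ considered is monotone and bounded: $\mathsf{min}\le v(S)\le v(T)\le\mathsf{max}$ for all nonempty $S\subseteq T\subseteq N$. For an integer $\delta\ge1$, $V_\delta$ denotes the set of such $v$ with $\delta\cdot\mathsf{min}\le\mathsf{max}<(\delta+1)\cdot\mathsf{min}$, and $V_{\ge2}=\bigcup_{\delta\ge2}V_\delta$. A coalition structure is a partition $C$ of $N$; its social welfare is $\mathsf{SW}(C\mid v)=\sum_{S\in C}v(S)$. Online process: an arrival order is a permutation $\pi=(\pi_1,\dots,\pi_n)$ of $N$; player $\pi_t$ arrives at time $t$; $\pi_{\prec t}$ is the set of players arriving before time $t$ and $\pi^{-1}(i)$ is the arrival time of $i$. For $S\subseteq N$, $\pi_{|S}$ denotes the players of $S$ in the relative order of $\pi$. Let $C^{t-1}$ be the coalition structure of players arrived before time $t$ ($C^0=\emptyset$). At time $t$, player $\pi_t$ either joins an existing coalition $S\in C^{t-1}$ or forms $\{\pi_t\}$ (choice $S=\emptyset$); decisions are never revised. A distribution policy $\varphi$ assigns to every $S\subseteq N$ and order $\pi_{|S}$ a vector $(\varphi_i(S,\pi_{|S}))_{i\in S}$ summing to $v(S)$.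 The AMC policy is $\varphi_i(S,\pi_{|S})=v\big((\pi_{\prec\pi^{-1}(i)}\cap S)\cup\{i\}\big)-v\big(\pi_{\prec\pi^{-1}(i)}\cap S\big)$ for $i\in S$ (each player receives her marginal contribution at the time she joins). Greedy players: $\pi_t$ chooses $S^*\in\arg\max_{S\in C^{t-1}\cup\{\emptyset\}}\varphi_{\pi_t}(S\cup\{\pi_t\},\pi_{|S\cup\{\pi_t\}})$ (predetermined tie-breaking). $C_g(v,\pi\mid\varphi)$ is the final structure. The competitive ratio over a class is $\alpha=\inf_{v,\pi}\mathsf{SW}(C_g(v,\pi\mid\varphi))/\max_C\mathsf{SW}(C\mid v)$, over $v$ in the class and all arrival orders $\pi$. *)

From HB Require Import structures.
From mathcomp Require Import all_boot all_order all_algebra all_fingroup.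
From mathcomp Require classical_sets.
From mathcomp Require Import reals.
Set Implicit Arguments. Unset Strict Implicit. Unset Printing Implicit Defensive.
Import Order.TTheory GRing.Theory Num.Theory.
Local Open Scope ring_scope.

(* Players are 'I_n; coalitions are {set 'I_n}; an arrival order is a
   permutation pi : {perm 'I_n}, player (pi t) arrives at time t. *)

Section Defs.
Variables (R : realType) (n : nat).
Implicit Types (v : {set 'I_n} -> R) (pi : {perm 'I_n}) (S T : {set 'I_n}).

Definition bounded_monotone (mn mx : R) v : Prop :=
  v set0 = 0 /\
  forall S T, S != set0 -> S \subset T ->
    mn <= v S /\ v S <= v T /\ v T <= mx.

Definition V_delta (mn mx : R) (delta : nat) v : Prop :=
  bounded_monotone mn mx v /\
  delta%:R * mn <= mx /\ mx < (delta.+1)%:R * mn.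

Definition V_ge2 (mn mx : R) v : Prop :=
  exists delta : nat, (2 <= delta)%N /\ V_delta mn mx delta v.

Definition arrived_before pi (i : 'I_n) : {set 'I_n} :=
  [set j | ((pi^-1)%g j < (pi^-1)%g i)%N].

Definition AMC v pi (S : {set 'I_n}) (i : 'I_n) : R :=
  v ((arrived_before pi i :&: S) :|: [set i]) - v (arrived_before pi i :&: S).

(* A (predetermined) tie-breaking rule: given the current coalition
   structure, the arriving player and the list of maximizing options
   (sublist of set0 :: C, in this order), return an index into that list
   (taken modulo its size). *)
Definition tiebreak := seq {set 'I_n} -> 'I_n -> seq {set 'I_n} -> nat.

(* One greedy step under distribution policy phi (phi S i = phi_i(S, pi|S)). *)
Definition greedy_step (tb : tiebreak) (phi : {set 'I_n} -> 'I_n -> R)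
    (C : seq {set 'I_n}) (i : 'I_n) : seq {set 'I_n} :=
  let pay S := phi (S :|: [set i]) i in
  let cands := set0 :: C in
  let m := \big[Num.max/pay set0]_(S <- C) pay S in
  let best := [seq S <- cands | pay S == m] in
  let S := nth set0 best (tb C i best %% size best) in
  if S == set0 then rcons C [set i]
  else [seq (if T == S then T :|: [set i] else T) | T <- C].

Definition greedy_outcome (tb : tiebreak) (phi : {set 'I_n} -> 'I_n -> R) pi
  : seq {set 'I_n} :=
  foldl (greedy_step tb phi) [::] [seq pi t | t <- enum 'I_n].

Definition SW v (C : seq {set 'I_n}) : R := \sum_(S <- C) v S.

Definition OPT v : R :=
  \big[Num.max/0]_(P : {set {set 'I_n}} | partition P [set: 'I_n])
     \sum_(S in P) v S.

End Defs.

Definition competitive_ratio_AMC_Vge2 (R : realType) (mn mx : R)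
    (tb : forall n : nat, tiebreak n) : R :=
  inf (fun r : R => exists (n : nat) (v : {set 'I_n} -> R) (pi : {perm 'I_n}),
         (0 < n)%N /\ V_ge2 mn mx v /\
         r = SW v (greedy_outcome (tb n) (AMC v pi) pi) / OPT v).

(* Under AMC a greedy player earns at least her stand-alone value v {i}, since
   founding a singleton is always an option, and the AMC payoffs inside a
   coalition add up to its value; so the greedy welfare is at least
   sum_i v {i}.  A block S of an optimal partition is worth at most max,
   while the singletons of its members are together worth v S if |S| = 1
   and at least 2 min otherwise; this gives the ratio 2 min / max.
   For tightness take 2(k+1) players grouped in the pairs {b, b + k + 1}; a
   coalition containing a pair is worth max, a pair-free one S is worth
   min + (|S| - 1) q with q slightly above min.  Arriving in increasing order,
   the first k + 1 players build one coalition; each later player completes a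
   pair in it, which pays less than min, so they build a second coalition.
   The welfare is 2 (min + k q) whereas the k + 1 pairs are worth (k + 1) max.
   Choosing (k + 1) min < max <= (k + 2) min and letting q tend to min, the
   ratio tends to 2 min / max; when max = 2 min a single player suffices. *)

From HB Require Import structures.
From mathcomp Require Import all_boot all_order all_algebra all_fingroup.
From mathcomp Require classical_sets.
From mathcomp Require Import reals.
From mathcomp Require Import zify ring lra.
Set Implicit Arguments. Unset Strict Implicit. Unset Printing Implicit Defensive.
Import Order.TTheory GRing.Theory Num.Theory.
Local Open Scope ring_scope.

Section Greedy.
Variables (R : realType) (n : nat) (tb : tiebreak n).
Variable phi : {set 'I_n} -> 'I_n -> R.
Implicit Types (C : seq {set 'I_n}) (S T U : {set 'I_n}) (i : 'I_n).

Definition greedy_pay i S := phi (S :|: [set i]) i.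

Definition greedy_best C i :=
  \big[Num.max/greedy_pay i set0]_(S <- C) greedy_pay i S.

Definition greedy_choice C i :=
  let best := [seq S <- set0 :: C | greedy_pay i S == greedy_best C i] in
  nth set0 best (tb C i best %% size best).

Definition join_coalition C S i :=
  [seq if T == S then T :|: [set i] else T | T <- C].

Lemma greedy_stepE C i : greedy_step tb phi C i =
  if greedy_choice C i == set0 then rcons C [set i]
  else join_coalition C (greedy_choice C i) i.
Proof. by []. Qed.

Lemma greedy_best_attained C i :
  exists2 S, S \in set0 :: C & greedy_pay i S = greedy_best C i.
Proof.
pose P x := x \in [seq greedy_pay i X | X <- set0 :: C].
suff /mapP[S SC ->] : P (greedy_best C i) by exists S.
rewrite /greedy_best big_seq; elim/big_ind: _ => [|x y Px Py|S SC].
- exact: map_f (mem_head _ _).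
- by rewrite maxEle; case: ifP.
- by apply: map_f; rewrite in_cons SC orbT.
Qed.

Lemma greedy_choice_best C i :
  greedy_choice C i \in set0 :: C /\
  greedy_pay i (greedy_choice C i) = greedy_best C i.
Proof.
set best := [seq S <- set0 :: C | greedy_pay i S == greedy_best C i].
have best_gt0 : (0 < size best)%N.
  have [S SC payS] := greedy_best_attained C i.
  by rewrite size_filter -has_count; apply/hasP; exists S; rewrite ?payS.
have : greedy_choice C i \in best by apply: mem_nth; rewrite ltn_pmod.
by rewrite mem_filter => /andP[/eqP-> ->].
Qed.

Lemma greedy_choice_mem C i : greedy_choice C i \in set0 :: C.
Proof. by case: (greedy_choice_best C i). Qed.

Lemma greedy_choice_max C i U : U \in set0 :: C ->
  greedy_pay i U <= greedy_pay i (greedy_choice C i).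
Proof.
rewrite (greedy_choice_best C i).2 in_cons => /predU1P[->|UC].
  exact: bigmax_ge_id.
exact: le_bigmax_seq.
Qed.

Lemma greedy_choice_strict C i S : S \in set0 :: C ->
  (forall U, U \in set0 :: C -> U != S -> greedy_pay i U < greedy_pay i S) ->
  greedy_choice C i = S.
Proof.
move=> SC Smax; apply/eqP; apply: contraT => choiceS.
have := Smax _ (greedy_choice_mem C i) choiceS.
by rewrite ltNge greedy_choice_max.
Qed.

Lemma greedy_step_alone C i :
  (forall U, U \in C -> U != set0 -> greedy_pay i U < greedy_pay i set0) ->
  greedy_step tb phi C i = rcons C [set i].
Proof.
move=> alone; rewrite greedy_stepE (@greedy_choice_strict _ _ set0) ?eqxx //.
  exact: mem_head.
by move=> U; rewrite in_cons => /predU1P[->|]; [rewrite eqxx | exact: alone].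
Qed.

Lemma greedy_step_join C i S : S \in C -> S != set0 ->
  (forall U, U \in set0 :: C -> U != S -> greedy_pay i U < greedy_pay i S) ->
  greedy_step tb phi C i = join_coalition C S i.
Proof.
move=> SC S0 Smax; rewrite greedy_stepE (@greedy_choice_strict _ _ S) //.
  by rewrite (negbTE S0).
by rewrite in_cons SC orbT.
Qed.

Lemma greedy_outcome_ind (P : nat -> seq {set 'I_n} -> Prop) (pi : {perm 'I_n}) :
  P 0%N [::] ->
  (forall (t : 'I_n) C, P t C -> P t.+1 (greedy_step tb phi C (pi t))) ->
  P n (greedy_outcome tb phi pi).
Proof.
move=> P0 PS; set arrivals := [seq pi t | t <- enum 'I_n].
have size_arrivals : size arrivals = n by rewrite size_map size_enum_ord.
suff prefix k : (k <= n)%N ->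
    P k (foldl (greedy_step tb phi) [::] (take k arrivals)).
  by have := prefix n (leqnn n); rewrite take_oversize ?size_arrivals.
elim: k => [|k IH] lt_k; first by rewrite take0.
pose t : 'I_n := Ordinal lt_k.
rewrite (take_nth (pi t)) ?size_arrivals // foldl_rcons.
rewrite (nth_map t) ?size_enum_ord // (nth_ord_enum t t).
by apply: (PS t); apply: IH; apply: ltnW.
Qed.

End Greedy.

Section Welfare.
Variables (R : realType) (n : nat) (v : {set 'I_n} -> R).
Implicit Types (C : seq {set 'I_n}) (S T : {set 'I_n}) (i : 'I_n).

Lemma SW_rcons C S : SW v (rcons C S) = SW v C + v S.
Proof. by rewrite /SW -cats1 big_cat big_seq1. Qed.

Lemma SW_join C S i : uniq C -> S \in C ->
  SW v (join_coalition C S i) = SW v C + (v (S :|: [set i]) - v S).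
Proof.
move=> uC SC; rewrite /SW big_map (bigD1_seq S) //= eqxx [in RHS](bigD1_seq S) //=.
under eq_bigr => T /negbTE -> do [].
by rewrite [RHS]addrC addrA subrK.
Qed.

Lemma join_coalition_uniq C S i : uniq C -> {in C, forall T, i \notin T} ->
  uniq (join_coalition C S i).
Proof.
move=> uC iC; rewrite map_inj_in_uniq // => T1 T2 T1C T2C.
case: eqP => [->|_]; case: eqP => [->|_] // eT.
- by have := iC T2 T2C; rewrite -eT !inE eqxx orbT.
- by have := iC T1 T1C; rewrite eT !inE eqxx orbT.
Qed.

End Welfare.

Section AMCWelfare.
Variables (R : realType) (n : nat) (tb : tiebreak n).
Variables (v : {set 'I_n} -> R) (pi : {perm 'I_n}).
Hypothesis v0 : v set0 = 0.
Implicit Types (C : seq {set 'I_n}) (S T X : {set 'I_n}) (i : 'I_n).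

Definition first_arrivals (k : nat) := [set j | ((pi^-1)%g j < k)%N].

Lemma arrived_before_perm (t : 'I_n) : arrived_before pi (pi t) = first_arrivals t.
Proof. by apply/setP => j; rewrite !inE permK. Qed.

Lemma first_arrivalsS (t : 'I_n) : first_arrivals t.+1 = pi t |: first_arrivals t.
Proof.
apply/setP => j; rewrite !inE ltnS leq_eqVlt val_eqE.
by rewrite (can2_eq (permKV pi) (permK pi)).
Qed.

Lemma AMC_pay i S : S \subset arrived_before pi i ->
  greedy_pay (AMC v pi) i S = v (S :|: [set i]) - v S.
Proof.
move=> S_before; rewrite /greedy_pay /AMC setIUr (setIidPr S_before).
suff -> : arrived_before pi i :&: [set i] = set0 by rewrite setU0.
by apply/setP => j; rewrite !inE; case: eqP => [->|]; rewrite ?ltnn ?andbF.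
Qed.

Definition welfare_inv C X :=
  [/\ uniq C, {in C, forall T, T \subset X} & \sum_(x in X) v [set x] <= SW v C].

Lemma welfare_inv_step C (t : 'I_n) : welfare_inv C (first_arrivals t) ->
  welfare_inv (greedy_step tb (AMC v pi) C (pi t)) (first_arrivals t.+1).
Proof.
case=> uC sC le_sum; rewrite /welfare_inv first_arrivalsS.
set i := pi t; set X := first_arrivals t.
have iX : i \notin X by rewrite inE permK ltnn.
have iC : {in C, forall T, i \notin T}.
  by move=> T /sC/subsetP sT; apply: contra iX; apply: sT.
have sX : X \subset i |: X by apply: subsetUr.
have iX_i : [set i] \subset i |: X by rewrite sub1set setU11.
rewrite big_setU1 //=.
set S := greedy_choice tb (AMC v pi) C i.
have pay_alone : v [set i] <= greedy_pay (AMC v pi) i S.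
  apply: le_trans (greedy_choice_max _ _ _ (mem_head _ _)).
  by rewrite AMC_pay ?sub0set // set0U v0 subr0.
rewrite greedy_stepE -/S; case: eqP => [_|/eqP S0].
  split.
  - by rewrite rcons_uniq uC andbT; apply: contra iX => /sC; rewrite sub1set.
  - move=> T; rewrite mem_rcons in_cons => /predU1P[->|/sC sT] //.
    exact: subset_trans sT sX.
  - by rewrite SW_rcons addrC lerD2r.
have SC : S \in C.
  by move: (greedy_choice_mem tb (AMC v pi) C i); rewrite in_cons (negbTE S0).
split.
- exact: join_coalition_uniq.
- move=> _ /mapP[T TC ->]; have sT := subset_trans (sC T TC) sX.
  by case: eqP => _ //; rewrite subUset sT.
- rewrite SW_join // -AMC_pay ?arrived_before_perm ?sC //.
  by rewrite addrC lerD.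
Qed.

Lemma welfare_outcome :
  \sum_x v [set x] <= SW v (greedy_outcome tb (AMC v pi) pi).
Proof.
have all_arrived : first_arrivals n =i predT by move=> j; rewrite inE ltn_ord.
rewrite -(eq_bigl _ _ all_arrived).
suff [] : welfare_inv (greedy_outcome tb (AMC v pi) pi) (first_arrivals n) by [].
apply: (greedy_outcome_ind (P := fun k C => welfare_inv C (first_arrivals k))).
  by split=> //; rewrite big_pred0 => [|x]; rewrite ?inE // /SW big_nil.
by move=> t C; apply: welfare_inv_step.
Qed.

End AMCWelfare.

Lemma OPT_ge (R : realType) n (v : {set 'I_n} -> R) P :
  partition P [set: 'I_n] -> \sum_(S in P) v S <= OPT v.
Proof. exact: (le_bigmax_cond (P := fun Q => partition Q [set: 'I_n]) 0). Qed.

Lemma partition_setT n : (0 < n)%N -> partition [set [set: 'I_n]] [set: 'I_n].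
Proof.
move=> n_gt0; rewrite /partition cover1 eqxx trivIset1 inE eq_sym.
by apply/set0Pn; exists (Ordinal n_gt0).
Qed.

Section LowerBound.
Variables (R : realType) (n : nat) (v : {set 'I_n} -> R) (mn mx : R).
Hypotheses (mn_gt0 : 0 < mn) (mx_ge : 2 * mn <= mx).
Hypothesis v_bm : bounded_monotone mn mx v.

Lemma bounded_monotone_range S : S != set0 -> mn <= v S /\ v S <= mx.
Proof.
by move=> S0; case: v_bm => _ /(_ S S S0 (subxx S))[? [_ ?]].
Qed.

Lemma singleton_values_ge x : mn <= v [set x].
Proof. by apply: (bounded_monotone_range _).1; apply/set0Pn; exists x; rewrite inE. Qed.

Let mx_gt0 : 0 < mx.
Proof. by apply: lt_le_trans mx_ge; rewrite mulr_gt0. Qed.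

Lemma coalition_value_le S : S != set0 ->
  2 * mn / mx * v S <= \sum_(x in S) v [set x].
Proof.
move=> S0; have [vS_ge vS_le] := bounded_monotone_range S0.
case: (leqP #|S| 1) => [S_le1 | S_gt1].
  have /cards1P[x ->] : #|S| == 1%N by rewrite eqn_leq S_le1 card_gt0.
  rewrite big_set1 ler_piMl ?ler_pdivrMr ?mul1r //.
  by apply: le_trans (singleton_values_ge x); apply: ltW.
have vS_bound : 2 * mn / mx * v S <= 2 * mn.
  by rewrite mulrAC ler_pdivrMr // ler_pM2l ?mulr_gt0.
apply: le_trans vS_bound _.
apply: le_trans _ (ler_sum _ (fun x _ => singleton_values_ge x)); rewrite sumr_const.
by rewrite -[mn *+ _]mulr_natl ler_pM2r // ler_nat.
Qed.

Lemma OPT_singleton_values_le :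
  2 * mn / mx * OPT v <= \sum_x v [set x].
Proof.
rewrite /OPT; elim/big_ind: _ => [|a b a_le b_le|P partP].
- rewrite mulr0; apply: sumr_ge0 => x _.
  exact: le_trans (ltW mn_gt0) (singleton_values_ge x).
- by rewrite maxEle; case: ifP.
have -> : \sum_x v [set x] = \sum_(x in [set: 'I_n]) v [set x].
  by apply: eq_bigl => x; rewrite inE.
rewrite (set_partition_big _ partP).
rewrite mulr_sumr; apply: ler_sum => S SP.
exact/coalition_value_le/(partition_neq0 partP).
Qed.

Lemma OPT_gt0 : (0 < n)%N -> 0 < OPT v.
Proof.
move=> n_gt0; apply: lt_le_trans (OPT_ge v (partition_setT n_gt0)).
rewrite big_set1; apply: lt_le_trans mn_gt0 (bounded_monotone_range _).1.
by apply/set0Pn; exists (Ordinal n_gt0).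
Qed.

Lemma AMC_ratio_ge (tb : tiebreak n) pi : (0 < n)%N ->
  2 * mn / mx <= SW v (greedy_outcome tb (AMC v pi) pi) / OPT v.
Proof.
move=> n_gt0; rewrite ler_pdivlMr ?OPT_gt0 //.
apply: le_trans OPT_singleton_values_le (welfare_outcome _ _ _).
by case: v_bm.
Qed.

End LowerBound.

Section HardGame.
Variables (R : realType) (k : nat) (mn mx q : R).
Hypotheses (mn_gt0 : 0 < mn) (mn_lt_q : mn < q).
Hypotheses (mx_ge : mn + k%:R * q <= mx) (mx_lt : mx < 2 * mn + k%:R * q).
Local Notation N := (k.+1 + k.+1)%N.
Implicit Types (S T : {set 'I_N}) (x y i t : 'I_N).

(* Player [x] belongs to the pair [block x]; a coalition is pair-free iff
   [block] is injective on it. *)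
Definition block x : 'I_k.+1 := Ordinal (ltn_pmod x (ltn0Sn k)).

Lemma val_block x : val (block x) = if (x < k.+1)%N then x : nat else (x - k.+1)%N.
Proof.
rewrite /=; have := ltn_ord x; case: (ltnP x k.+1) => [x_lt|x_ge] x_ltN.
  by rewrite modn_small.
by rewrite -{1}(subnK x_ge) modnDr modn_small //; lia.
Qed.

Lemma block_lshift (b : 'I_k.+1) : block (lshift k.+1 b) = b.
Proof. by apply: val_inj; rewrite val_block /= ltn_ord. Qed.

Lemma block_rshift (b : 'I_k.+1) : block (rshift k.+1 b) = b.
Proof. by apply: val_inj; rewrite val_block /= ltnNge leq_addr /= addKn. Qed.

Definition hard_game S : R :=
  if S == set0 then 0
  else if dinjectiveb block S then mn + (#|S|.-1)%:R * q else mx.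

Lemma transversal_card S : dinjectiveb block S -> (#|S| <= k.+1)%N.
Proof.
move/dinjectiveP => block_inj; rewrite -(card_in_imset block_inj).
by apply: leq_trans (max_card _) _; rewrite card_ord.
Qed.

Lemma transversal_sub S T : S \subset T -> dinjectiveb block T -> dinjectiveb block S.
Proof. by move=> /subsetP ST /dinjectiveP injT; apply/dinjectiveP; apply: sub_in2 injT. Qed.

Lemma hard_game_transversal S : S != set0 -> dinjectiveb block S ->
  hard_game S = mn + (#|S|.-1)%:R * q.
Proof. by move=> S0 transS; rewrite /hard_game (negbTE S0) transS. Qed.

Lemma hard_game_pair S x y : x \in S -> y \in S -> x != y -> block x = block y ->
  hard_game S = mx.
Proof.
move=> xS yS xy bxy; have S0 : S != set0 by apply/set0Pn; exists x.
suff /negbTE nt : ~~ dinjectiveb block S by rewrite /hard_game (negbTE S0) nt.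
by apply/dinjectivePn; exists x => //; exists y; rewrite // !inE eq_sym xy.
Qed.

Let q_ge0 : 0 <= q. Proof. exact: ltW (lt_trans mn_gt0 mn_lt_q). Qed.

Lemma hard_game_transversal_le S : dinjectiveb block S -> hard_game S <= mn + k%:R * q.
Proof.
rewrite /hard_game; case: eqP => _ transS.
  by apply: addr_ge0; rewrite ?mulr_ge0 // ltW.
rewrite transS lerD2l ler_wpM2r // ler_nat.
by case: #|S| (transversal_card transS).
Qed.

Lemma hard_game_range S : S != set0 -> mn <= hard_game S <= mx.
Proof.
move=> S0; rewrite /hard_game (negbTE S0); case: ifP => [transS|_].
  rewrite lerDl mulr_ge0 //=.
  apply: le_trans mx_ge; rewrite lerD2l ler_wpM2r // ler_nat.
  by case: #|S| (transversal_card transS).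
by rewrite lexx andbT; apply: le_trans mx_ge; rewrite lerDl mulr_ge0.
Qed.

Lemma hard_game_bounded_monotone : bounded_monotone mn mx hard_game.
Proof.
split=> [|S T S0 ST]; first by rewrite /hard_game eqxx.
have T0 : T != set0 by apply: contraNneq S0 => T0; rewrite -subset0 -T0.
have /andP[-> _] := hard_game_range S0; have /andP[_ ->] := hard_game_range T0.
split=> //; split=> //.
case: (boolP (dinjectiveb block T)) => transT; last first.
  by rewrite /hard_game (negbTE T0) (negbTE transT); case/andP: (hard_game_range S0).
rewrite !hard_game_transversal ?(transversal_sub ST) // lerD2l ler_wpM2r // ler_nat.
by rewrite -!subn1 leq_sub2r // subset_leq_card.
Qed.

Definition low (j : nat) : {set 'I_N} := [set x : 'I_N | (x < j)%N].
Definition high (j : nat) : {set 'I_N} := [set x : 'I_N | (k.+1 <= x < j)%N].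

Lemma lowS t : low t.+1 = t |: low t.
Proof. by apply/setP => x; rewrite !inE ltnS leq_eqVlt val_eqE. Qed.

Lemma highS t : (k.+1 <= t)%N -> high t.+1 = t |: high t.
Proof.
move=> t_ge; apply/setP => x; rewrite !inE ltnS (leq_eqVlt x) val_eqE.
by case: eqP => [->|_]; rewrite ?t_ge.
Qed.

Lemma card_low j : (j <= N)%N -> #|low j| = j.
Proof.
elim: j => [_|j IH j_lt].
  by apply/eqP; rewrite cards_eq0; apply/eqP/setP => x; rewrite !inE.
by rewrite (lowS (Ordinal j_lt)) cardsU1 IH ?(ltnW j_lt) // inE ltnn.
Qed.

Lemma low_transversal j : (j <= k.+1)%N -> dinjectiveb block (low j).
Proof.
move=> j_le; apply/dinjectiveP => x y; rewrite !inE => x_lt y_lt /(congr1 val).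
by rewrite !val_block (leq_trans x_lt j_le) (leq_trans y_lt j_le) => /val_inj.
Qed.

Lemma high_transversal j : dinjectiveb block (high j).
Proof.
apply/dinjectiveP => x y; rewrite !inE => /andP[x_ge _] /andP[y_ge _] /(congr1 val).
by rewrite !val_block ltnNge x_ge ltnNge y_ge /= => e; apply: val_inj => /=; lia.
Qed.

Lemma hard_game_low : hard_game (low k.+1) = mn + k%:R * q.
Proof.
have lowN : (k.+1 <= N)%N by rewrite leq_addr.
rewrite hard_game_transversal ?low_transversal ?card_low //.
by apply/set0Pn; exists (lshift k.+1 ord0); rewrite inE.
Qed.

Lemma arrived_before1 i : arrived_before 1 i = low i.
Proof. by apply/setP => x; rewrite !inE invg1 !perm1. Qed.

Local Notation pay := (greedy_pay (AMC hard_game 1)).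

Lemma hard_pay i S : S \subset low i -> pay i S = hard_game (S :|: [set i]) - hard_game S.
Proof. by move=> S_low; rewrite AMC_pay ?arrived_before1. Qed.

Lemma pay_alone i : pay i set0 = mn.
Proof.
rewrite hard_pay ?sub0set // set0U {2}/hard_game eqxx subr0.
rewrite hard_game_transversal ?cards1 ?mul0r ?addr0 //.
  by apply/set0Pn; exists i; rewrite inE.
by apply/dinjectiveP => x y; rewrite !inE => /eqP-> /eqP->.
Qed.

Lemma pay_extend i S : S \subset low i -> S != set0 ->
  dinjectiveb block (S :|: [set i]) -> pay i S = q.
Proof.
move=> S_low S0 trans_Si; have iS : i \notin S.
  by apply/negP => /(subsetP S_low); rewrite inE ltnn.
have Si0 : S :|: [set i] != set0 by apply/set0Pn; exists i; rewrite !inE eqxx orbT.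
rewrite hard_pay // !hard_game_transversal ?(transversal_sub (subsetUl _ _) trans_Si) //.
rewrite setUC cardsU1 iS add1n /=; move: S0; rewrite -card_gt0.
by case: #|S| => // m _; rewrite /= -natr1 mulrDl mul1r; ring.
Qed.

Lemma pay_full i : (k.+1 <= i)%N -> pay i (low k.+1) < mn.
Proof.
move=> i_ge; have i_lt := ltn_ord i; have partner_lt : (i - k.+1 < N)%N by lia.
rewrite hard_pay; last by apply/subsetP => x; rewrite !inE => /leq_trans; apply.
rewrite hard_game_low (hard_game_pair (x := Ordinal partner_lt) (y := i)).
- by move: mx_lt; lra.
- by rewrite !inE /=; apply/orP; left; lia.
- by rewrite !inE eqxx orbT.
- by rewrite -val_eqE /=; apply/eqP; lia.
by apply: val_inj; rewrite !val_block /=; do 2!case: ifP; lia.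
Qed.

Variable tb : tiebreak N.

Definition trace (j : nat) : seq {set 'I_N} :=
  if j == 0%N then [::] else if (j <= k.+1)%N then [:: low j] else [:: low k.+1; high j].

Lemma low_neq0 j : (0 < j)%N -> low j != set0.
Proof. by move=> j_gt0; apply/set0Pn; exists (lshift k.+1 ord0); rewrite inE. Qed.

Lemma high_neq0 j : (k.+1 < j)%N -> high j != set0.
Proof. by move=> j_gt; apply/set0Pn; exists (rshift k.+1 ord0); rewrite inE /= addn0 leqnn. Qed.

Lemma trace_step_low t : (t < k.+1)%N ->
  greedy_step tb (AMC hard_game 1) (trace t) t = trace t.+1.
Proof.
move=> t_lt; rewrite /trace /= t_lt (ltnW t_lt) lowS.
case: eqP => [t0|/eqP t0].
  have -> : low t = set0 by apply/setP => x; rewrite !inE t0.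
  by rewrite greedy_step_alone // setU0.
have t_gt0 : (0 < t)%N by rewrite lt0n.
rewrite (greedy_step_join tb (S := low t)) ?mem_head ?low_neq0 //.
  by rewrite /join_coalition /= eqxx setUC.
move=> U; rewrite !inE => /orP[/eqP->|/eqP->]; rewrite ?eqxx // => _.
rewrite pay_alone pay_extend ?low_neq0 // setUC -lowS.
exact: low_transversal.
Qed.

Lemma trace_step_switch t : nat_of_ord t = k.+1 ->
  greedy_step tb (AMC hard_game 1) (trace t) t = trace t.+1.
Proof.
move=> t_eq; rewrite /trace /= highS ?t_eq // leqnn ltnn.
have -> : high k.+1 = set0 by apply/setP => x; rewrite !inE leqNgt andNb.
rewrite greedy_step_alone ?setU0 // => U; rewrite inE => /eqP-> _.
by rewrite pay_alone pay_full ?t_eq.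
Qed.

Lemma trace_step_high t : (k.+1 < t)%N ->
  greedy_step tb (AMC hard_game 1) (trace t) t = trace t.+1.
Proof.
move=> t_gt; have t_le : (t <= k.+1)%N = false by rewrite leqNgt t_gt.
have tS_le : (t.+1 <= k.+1)%N = false by rewrite leqNgt ltnS ltnW.
rewrite /trace t_le tS_le (gtn_eqF (ltn_trans (ltn0Sn k) t_gt)) /=.
have high_low : high t \subset low t by apply/subsetP => x; rewrite !inE => /andP[].
have pay_high : pay t (high t) = q.
  by rewrite pay_extend ?high_neq0 // setUC -highS ?(ltnW t_gt) ?high_transversal.
rewrite (greedy_step_join tb (S := high t)) ?high_neq0 ?inE ?eqxx ?orbT //.
  have low_high : (low k.+1 == high t) = false.
    apply/negbTE/negP => /eqP lowE.
    have : lshift k.+1 ord0 \in low k.+1 by rewrite inE.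
    by rewrite lowE inE.
  by rewrite /join_coalition /= low_high eqxx setUC -highS // ltnW.
move=> U; rewrite !inE pay_high => /or3P[/eqP->|/eqP->|/eqP->]; rewrite ?eqxx // => _.
  by rewrite pay_alone.
by apply: lt_trans (pay_full (ltnW t_gt)) mn_lt_q.
Qed.

Lemma hard_game_outcome :
  greedy_outcome tb (AMC hard_game 1) 1 = [:: low k.+1; high N].
Proof.
have -> : [:: low k.+1; high N] = trace N.
  by rewrite /trace !ifF //; apply/negbTE; lia.
apply: (greedy_outcome_ind (P := fun j C => C = trace j)) => // t _ ->.
rewrite perm1; case: (ltngtP t k.+1) => [t_lt|t_gt|t_eq].
- exact: trace_step_low.
- exact: trace_step_high.
- exact: trace_step_switch.
Qed.

Lemma SW_hard_game_outcome :
  SW hard_game (greedy_outcome tb (AMC hard_game 1) 1) <= 2 * (mn + k%:R * q).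
Proof.
rewrite hard_game_outcome /SW big_cons big_seq1 hard_game_low.
by move: (hard_game_transversal_le (high_transversal N)); lra.
Qed.

Definition pair (b : 'I_k.+1) : {set 'I_N} := [set x | block x == b].

Lemma hard_game_pair_value b : hard_game (pair b) = mx.
Proof.
apply: (hard_game_pair (x := lshift k.+1 b) (y := rshift k.+1 b)).
- by rewrite inE block_lshift.
- by rewrite inE block_rshift.
- by rewrite -val_eqE /= neq_ltn (leq_trans (ltn_ord b) (leq_addr _ _)).
by rewrite block_lshift block_rshift.
Qed.

Lemma pairs_partition :
  partition [set pair b | b in [set: 'I_k.+1]] [set: 'I_N] /\
  {in [set: 'I_k.+1] &, injective pair}.
Proof.
have [] := @indexed_partition _ _ [set: 'I_k.+1] pair.
- move=> b c _ _ cb; rewrite -setI_eq0; apply/eqP/setP => x; rewrite !inE.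
  by apply/negP => /andP[/eqP-> /eqP bc]; rewrite bc eqxx in cb.
- by move=> b _; apply/set0Pn; exists (lshift k.+1 b); rewrite inE block_lshift.
set P := [set pair b | b in _] => partP pair_inj; split=> //.
suff <- : cover P = [set: 'I_N] by [].
apply/setP => x; rewrite inE; apply/bigcupP; exists (pair (block x)).
  exact: imset_f.
by rewrite inE.
Qed.

Lemma OPT_hard_game : k.+1%:R * mx <= OPT hard_game.
Proof.
have [partP pair_inj] := pairs_partition.
apply: le_trans (OPT_ge hard_game partP); rewrite big_imset //=.
under eq_bigr => b _ do rewrite hard_game_pair_value.
by rewrite sumr_const cardsT card_ord mulr_natl.
Qed.

Lemma hard_game_ratio :
  SW hard_game (greedy_outcome tb (AMC hard_game 1) 1) / OPT hard_game <=
  2 * (mn + k%:R * q) / (k.+1%:R * mx).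
Proof.
have kq_ge0 : 0 <= k%:R * q by rewrite mulr_ge0.
have mx_gt0 : 0 < mx by move: mn_gt0 mx_ge kq_ge0; lra.
have kmx_gt0 : 0 < k.+1%:R * mx by rewrite mulr_gt0.
rewrite ler_pdivrMr ?(lt_le_trans kmx_gt0 OPT_hard_game) //.
apply: le_trans SW_hard_game_outcome _.
rewrite -{1}[2 * _](divfK (lt0r_neq0 kmx_gt0)) ler_wpM2l ?OPT_hard_game //.
by rewrite divr_ge0 ?(ltW kmx_gt0) // mulr_ge0 // addr_ge0 // ltW.
Qed.

End HardGame.

Section ConstantGame.
Variables (R : realType) (c : R).

Definition constant_game {n} (S : {set 'I_n}) : R := if S == set0 then 0 else c.

Lemma constant_game_bounded_monotone n mn : mn <= c ->
  bounded_monotone mn c (@constant_game n).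
Proof.
move=> mn_le; split=> [|S T S0 ST]; first by rewrite /constant_game eqxx.
have T0 : T != set0 by apply: contraNneq S0 => T0; rewrite -subset0 -T0.
by rewrite /constant_game (negbTE S0) (negbTE T0) lexx.
Qed.

Lemma constant_game_ratio (tb : tiebreak 1) pi : 0 < c ->
  SW (@constant_game 1) (greedy_outcome tb (AMC (@constant_game 1) pi) pi) /
  OPT (@constant_game 1) <= 1.
Proof.
move=> c_gt0; set v := @constant_game 1.
have setT0 : [set: 'I_1] != set0 by apply/set0Pn; exists ord0.
have OPT_ge_c : c <= OPT v.
  apply: le_trans (OPT_ge v (partition_setT (ltn0Sn 0))).
  by rewrite big_set1 /v /constant_game (negbTE setT0).
rewrite ler_pdivrMr ?mul1r ?(lt_le_trans c_gt0 OPT_ge_c) //; apply: le_trans OPT_ge_c.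
rewrite /greedy_outcome enum_ordSl enum_ord0 /= greedy_step_alone //.
have set1_0 : [set pi ord0] != set0 by apply/set0Pn; exists (pi ord0); rewrite inE.
by rewrite /SW big_seq1 /v /constant_game (negbTE set1_0).
Qed.

End ConstantGame.

Lemma inf_eq_approx (R : realType) (E : R -> Prop) a :
  (forall r, E r -> a <= r) -> (forall e, 0 < e -> exists2 r, E r & r <= a + e) ->
  inf E = a.
Proof.
move=> lbE approxE; have [r Er _] := approxE 1 ltr01.
apply/eqP; rewrite eq_le lb_le_inf ?andbT; [|by exists r|by move=> s /lbE].
apply/ler_addgt0Pr => e e_gt0; have [s Es le_s] := approxE e e_gt0.
by apply: le_trans le_s; apply: ge_inf Es; exists a => t /lbE.
Qed.

Lemma mx_eq2_or_between (R : realType) (mn mx : R) d : 0 < mn -> (2 <= d)%N ->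
  d%:R * mn <= mx -> mx < d.+1%:R * mn ->
  mx = 2 * mn \/ exists2 k, (0 < k)%N & k.+1%:R * mn < mx <= k.+2%:R * mn.
Proof.
move=> mn_gt0; case: d => [|[|d]] // _ mx_ge mx_lt.
case: (ltP (d.+2%:R * mn) mx) => [mx_gt|mx_le].
  by right; exists d.+1; rewrite ?mx_gt ?ltW.
have mx_eq : mx = d.+2%:R * mn by apply/eqP; rewrite eq_le mx_le mx_ge.
case: d mx_eq {mx_ge mx_lt mx_le} => [|d] mx_eq; first by left.
right; exists d.+1 => //; rewrite mx_eq lexx andbT ltr_pM2r ?ltr_nat //.
Qed.

Lemma hard_game_parameters (R : realType) (mn mx e : R) k : 0 < mn -> (0 < k)%N ->
  k.+1%:R * mn < mx -> mx <= k.+2%:R * mn -> 0 < e ->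
  exists q, [/\ mn < q, mn + k%:R * q <= mx, mx < 2 * mn + k%:R * q &
    2 * (mn + k%:R * q) / (k.+1%:R * mx) <= 2 * mn / mx + e].
Proof.
move=> mn_gt0 k_gt0 mx_gt mx_le e_gt0.
set K : R := k%:R; have K_gt0 : 0 < K by rewrite ltr0n.
have kS : k.+1%:R = K + 1 by rewrite -natr1.
have kSS : k.+2%:R = K + 1 + 1 by rewrite -natr1 kS.
rewrite kS in mx_gt *; rewrite kSS in mx_le.
have mx_gt0 : 0 < mx by apply: lt_trans mx_gt; rewrite mulr_gt0 ?addr_gt0.
pose t := Num.min (e * mx / 2) ((mx - (K + 1) * mn) / K).
have t_gt0 : 0 < t by rewrite lt_min !divr_gt0 ?mulr_gt0 ?subr_gt0.
have t_le : t <= e * mx / 2 by rewrite ge_min lexx.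
have Kt_le : K * t <= mx - (K + 1) * mn.
  by rewrite mulrC -ler_pdivlMr // ge_min lexx orbT.
have Kt_gt0 : 0 < K * t by rewrite mulr_gt0.
exists (mn + t); split.
- by rewrite ltrDl.
- by move: Kt_le; rewrite !mulrDr !mulrDl; lra.
- by move: mx_le Kt_gt0; rewrite !mulrDr !mulrDl; lra.
have -> : 2 * (mn + K * (mn + t)) / ((K + 1) * mx) =
          2 * mn / mx + 2 * (K * t) / ((K + 1) * mx).
  by field; rewrite !lt0r_neq0 // -/K addr_gt0.
rewrite lerD2l ler_pdivrMr ?mulr_gt0 ?addr_gt0 //.
have := ler_wpM2l (ltW K_gt0) t_le.
have : 0 <= e * mx by rewrite mulr_ge0 ?ltW.
lra.
Qed.

Unset Implicit Arguments.

Theorem theorem4 (R : realType) (mn mx : R)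
    (tb : forall n : nat, tiebreak n) :
  0 < mn -> mn <= mx ->
  (exists delta : nat, (2 <= delta)%N /\
     delta%:R * mn <= mx /\ mx < (delta.+1)%:R * mn) ->
  competitive_ratio_AMC_Vge2 mn mx tb = 2 * mn / mx.
Proof.
move=> mn_gt0 mn_le_mx [d [d_ge2 [mx_ge mx_lt]]].
have mx_ge2 : 2 * mn <= mx by apply: le_trans mx_ge; rewrite ler_pM2r // ler_nat.
have in_V_ge2 n (v : {set 'I_n} -> R) : bounded_monotone mn mx v -> V_ge2 mn mx v.
  by move=> v_bm; exists d.
apply: inf_eq_approx => [_ [n [v [pi [n_gt0 [[_ [_ [v_bm _]]] ->]]]]] | e e_gt0].
  exact: AMC_ratio_ge.
have mx_gt0 : 0 < mx by apply: lt_le_trans mx_ge2; rewrite mulr_gt0.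
case: (mx_eq2_or_between mn_gt0 d_ge2 mx_ge mx_lt) => [mx_eq | [k k_gt0 /andP[mx_gt mx_le]]].
  eexists; first exists 1%N, (constant_game mx), 1%g.
    by split=> //; split; [apply/in_V_ge2/constant_game_bounded_monotone|].
  apply: le_trans (constant_game_ratio _ _ mx_gt0) _.
  by rewrite mx_eq divff ?lerDl ?ltW // mulf_neq0 ?lt0r_neq0.
have [q [mn_lt_q q_mx_ge q_mx_lt ratio_le]] :=
  hard_game_parameters mn_gt0 k_gt0 mx_gt mx_le e_gt0.
eexists; first exists (k.+1 + k.+1)%N, (hard_game mn mx q), 1%g.
  by split=> //; split; [apply/in_V_ge2/hard_game_bounded_monotone|].
exact: le_trans (hard_game_ratio _ _ _ _ _) ratio_le.
Qed.
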